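(* Let $A$ be a complete Noetherian local ring with maximal ideal $\mathfrak m$, $M$ a finitely generated $A$-module, $M_n=M\otimes_AA/\mathfrak m^n$, and $G_n=\operatorname{Aut}_A(M_n)$, with the natural reduction homomorphisms $G_{n+1}\to G_n$. Then the inverse system $(G_n)_{n\ge1}$ satisfies the Mittag-Leffler condition: for each $n\ge1$ there is $N\ge n$ such that the images of $G_i$ and $G_j$ in $G_n$ coincide for all $i,j\ge N$. *)

From HB Require Import structures.
From mathcomp Require Import all_boot all_order all_algebra.
Set Implicit Arguments. Unset Strict Implicit. Unset Printing Implicit Defensive.
Import Order.TTheory GRing.Theory.
Local Open Scope ring_scope.

Section CommAlg.
Variable A : comNzRingType.

Definition is_ideal (I : A -> Prop) : Prop :=
  [/\ I 0, (forall x y, I x -> I y -> I (x + y)) & (forall a x, I x -> I (a * x))].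

Definition proper_ideal (I : A -> Prop) : Prop := is_ideal I /\ ~ I 1.

Definition maximal_ideal (I : A -> Prop) : Prop :=
  proper_ideal I /\
  forall J : A -> Prop, proper_ideal J -> (forall x, I x -> J x) -> forall x, J x -> I x.

Definition local_ring_with (m : A -> Prop) : Prop :=
  maximal_ideal m /\ forall J, maximal_ideal J -> forall x, J x <-> m x.

Definition noetherian_ring : Prop :=
  forall I : A -> Prop, is_ideal I -> exists s : seq A,
    forall x, I x <-> exists c : seq A, x = \sum_(i < size s) c`_i * s`_i.

Fixpoint ideal_pow (m : A -> Prop) (n : nat) : A -> Prop :=
  match n with
  | 0 => fun _ => True
  | n'.+1 => fun x => exists s : seq (A * A),
      (forall p, p \in s -> m p.1 /\ ideal_pow m n' p.2) /\
      x = \sum_(p <- s) p.1 * p.2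
  end.

Definition madic_complete (m : A -> Prop) : Prop :=
  (forall x, (forall n, ideal_pow m n x) -> x = 0) /\
  (forall a : nat -> A, (forall k, ideal_pow m k (a k.+1 - a k)) ->
     exists l, forall k, ideal_pow m k (l - a k)).

Variable M : lmodType A.

Definition fin_gen_module : Prop :=
  exists s : seq M, forall x : M, exists c : seq A,
    x = \sum_(i < size s) c`_i *: s`_i.

Definition mod_pow (m : A -> Prop) (n : nat) (x : M) : Prop :=
  exists s : seq (A * M), (forall p, p \in s -> ideal_pow m n p.1) /\
    x = \sum_(p <- s) p.1 *: p.2.

(* g : M -> M induces a well-defined A-linear automorphism of M / N
   (N a submodule given as predicate). Elements of Aut_A(M/N) are exactly
   the classes of such maps modulo "g x - g' x in N for all x". *)
Definition aut_mod (N : M -> Prop) (g : M -> M) : Prop :=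
  [/\ (forall x y, N (x - y) -> N (g x - g y)),
      (forall x y, N (g (x + y) - (g x + g y))),
      (forall (a : A) x, N (g (a *: x) - a *: g x)),
      (forall x y, N (g x - g y) -> N (x - y)) &
      (forall y, exists x, N (g x - y))].

(* G_n = Aut_A(M_n), M_n = M ⊗ A/m^n = M / m^n M. *)
Definition G_elt (m : A -> Prop) (n : nat) (g : M -> M) : Prop :=
  aut_mod (mod_pow m n) g.

Definition in_image (m : A -> Prop) (n i : nat) (g : M -> M) : Prop :=
  exists h : M -> M, G_elt m i h /\ forall x, mod_pow m n (h x - g x).

End CommAlg.

From HB Require Import structures.
From mathcomp Require Import all_boot all_order all_algebra.
From Stdlib Require Import Classical.
Set Implicit Arguments. Unset Strict Implicit. Unset Printing Implicit Defensive.
Import GRing.Theory.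
Local Open Scope ring_scope.

(** Fix generators g_1, ..., g_r
    of M.  The images of G_i in G_n are controlled by the submodules

        L_i = { (h g_1, ..., h g_r) mod m^n : h an endomorphism of M_i }

    of (M_n)^r: they decrease with i, hence stabilize by finite length, and
    an endomorphism of M_i that reduces to an automorphism of M_n (n >= 1) is
    itself an automorphism, surjective by Nakayama and injective because a
    surjective endomorphism of a finite-length module is injective (the
    kernels of its iterates stabilize). *)

Section IdealPow.
Variables (A : comNzRingType) (m : A -> Prop).

Lemma ideal_pow_is_ideal j : is_ideal (ideal_pow m j).
Proof.
elim: j => [|j IH] /=; first by split.
have [_ _ IHM] := IH.
split.
- by exists [::]; rewrite big_nil.
- move=> x y [s [Hs ->]] [t [Ht ->]]; exists (s ++ t); rewrite big_cat; split=> //.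
  by move=> p; rewrite mem_cat => /orP [/Hs|/Ht].
- move=> a x [s [Hs ->]]; exists [seq (p.1, a * p.2) | p <- s]; split.
  + by move=> _ /mapP [p /Hs [H1 H2] ->]; split=> //; apply: IHM.
  + by rewrite big_map big_distrr; apply: eq_bigr => p _; rewrite /= mulrCA.
Qed.

Lemma ideal_pow0 j : ideal_pow m j 0.
Proof. by case: (ideal_pow_is_ideal j). Qed.

Lemma ideal_powD j x y : ideal_pow m j x -> ideal_pow m j y -> ideal_pow m j (x + y).
Proof. by case: (ideal_pow_is_ideal j) => _ + _; apply. Qed.

Lemma ideal_powMl j a x : ideal_pow m j x -> ideal_pow m j (a * x).
Proof. by case: (ideal_pow_is_ideal j) => _ _; apply. Qed.

Lemma ideal_pow_sum j (I : eqType) (s : seq I) (F : I -> A) :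
  (forall i, i \in s -> ideal_pow m j (F i)) -> ideal_pow m j (\sum_(i <- s) F i).
Proof.
move=> Hs; rewrite big_seq; apply: big_ind Hs; [exact: ideal_pow0|exact: ideal_powD].
Qed.

Lemma ideal_pow_le k j x : (k <= j)%N -> ideal_pow m j x -> ideal_pow m k x.
Proof.
move=> /subnK <-; elim: (j - k)%N x => [|d IH] x //= [s [Hs ->]].
by apply: IH; apply: ideal_pow_sum => p /Hs [_ Hp]; apply: ideal_powMl.
Qed.

Lemma ideal_pow_mul j k a b :
  ideal_pow m j a -> ideal_pow m k b -> ideal_pow m (j + k) (a * b).
Proof.
elim: j a => [|j IH] a /=; first by move=> _; apply: ideal_powMl.
move=> [s [Hs ->]] Hb; exists [seq (p.1, p.2 * b) | p <- s]; split.
  by move=> _ /mapP [p /Hs [H1 H2] ->]; split=> //; apply: IH.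
by rewrite big_map big_distrl; apply: eq_bigr => p _; rewrite /= mulrA.
Qed.

Lemma ideal_powSM j a b : m a -> ideal_pow m j b -> ideal_pow m j.+1 (a * b).
Proof.
move=> Ha Hb; exists [:: (a, b)]; rewrite big_seq1.
by split=> // p; rewrite inE => /eqP ->.
Qed.

End IdealPow.

Section Submodules.
Variables (A : comNzRingType) (V : lmodType A).
Implicit Types (B N P Q U X : V -> Prop) (x y z : V).

Definition submodule P :=
  [/\ P 0, forall x y, P x -> P y -> P (x + y) & forall a x, P x -> P (a *: x)].

Definition incl P Q := forall x, P x -> Q x.

Lemma submod0 P : submodule P -> P 0. Proof. by case. Qed.

Lemma submodD P x y : submodule P -> P x -> P y -> P (x + y).
Proof. by case=> _ + _; apply. Qed.

Lemma submodZ P a x : submodule P -> P x -> P (a *: x).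
Proof. by case=> _ _; apply. Qed.

Lemma submodN P x : submodule P -> P x -> P (- x).
Proof. by move=> sP Px; rewrite -scaleN1r; apply: submodZ. Qed.

Lemma submodB P x y : submodule P -> P x -> P y -> P (x - y).
Proof. by move=> sP Px Py; apply: submodD => //; apply: submodN. Qed.

Lemma submod_sum P (I : eqType) (s : seq I) (F : I -> V) :
  submodule P -> (forall i, i \in s -> P (F i)) -> P (\sum_(i <- s) F i).
Proof.
move=> sP Hs; rewrite big_seq; apply: big_ind Hs; [exact: submod0|move=> x y; exact: submodD].
Qed.

Lemma submod_zero : submodule (fun x => x = 0).
Proof. by split=> // [x y -> ->|a x ->]; rewrite ?addr0 ?scaler0. Qed.

Section Congruence.
Variables (N : V -> Prop) (sN : submodule N).

Lemma eqmod_refl x : N (x - x). Proof. by rewrite subrr; apply: submod0. Qed.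

Lemma eqmod_sym x y : N (x - y) -> N (y - x).
Proof. by move=> H; rewrite -opprB; apply: submodN. Qed.

Lemma eqmod_trans y x z : N (x - y) -> N (y - z) -> N (x - z).
Proof. by move=> H1 H2; rewrite -(subrKA y); apply: submodD. Qed.

Lemma eqmodD x x' y y' : N (x - x') -> N (y - y') -> N ((x + y) - (x' + y')).
Proof. by move=> H1 H2; rewrite opprD addrACA; apply: submodD. Qed.

Lemma eqmodZ a x y : N (x - y) -> N (a *: x - a *: y).
Proof. by move=> H; rewrite -scalerBr; apply: submodZ. Qed.

Lemma eqmod_mem x y : N (x - y) -> N y -> N x.
Proof. by move=> H1 H2; rewrite -(subrK y x); apply: submodD. Qed.

(* Additive and homogeneous modulo N; this does not make [h] well defined on V/N. *)
Definition linear_mod (h : V -> V) :=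
  (forall x y, N (h (x + y) - (h x + h y))) /\ (forall a x, N (h (a *: x) - a *: h x)).

Lemma linear_mod0 h : linear_mod h -> N (h 0).
Proof.
case=> + _ => /(_ 0 0); rewrite addr0 opprD addrA subrr add0r.
by move/(submodN sN); rewrite opprK.
Qed.

Lemma linear_mod_ker h : linear_mod h -> submodule (fun x => N (h x)).
Proof.
move=> lh; case: (lh) => hD hZ; split; first exact: linear_mod0.
- by move=> x y Hx Hy; apply: (eqmod_mem (hD x y)); apply: submodD.
- by move=> a x Hx; apply: (eqmod_mem (hZ a x)); apply: submodZ.
Qed.

Lemma linear_mod_id : linear_mod id.
Proof. by split=> *; apply: eqmod_refl. Qed.

Lemma linear_mod_wd h x y :
  linear_mod h -> (forall z, N z -> N (h z)) -> N (x - y) -> N (h x - h y).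
Proof.
move=> [hD _] hN Hxy; have := hD (x - y) y; rewrite subrK => Hx.
by apply: (eqmod_trans (y := h (x - y) + h y)) Hx _; rewrite addrK; apply: hN.
Qed.

Lemma linear_mod_comp f g : linear_mod f -> (forall z, N z -> N (f z)) ->
  linear_mod g -> linear_mod (f \o g).
Proof.
move=> [fD fZ] fN [gD gZ]; split=> [x y|a x] /=.
- by apply: (eqmod_trans (y := f (g x + g y))) (fD _ _); apply: linear_mod_wd.
- by apply: (eqmod_trans (y := f (a *: g x))) (fZ _ _); apply: linear_mod_wd.
Qed.

Lemma linear_mod_iter h k : linear_mod h -> (forall z, N z -> N (h z)) ->
  linear_mod (iter k h).
Proof.
move=> lh hN; elim: k => [|k IH]; first exact: linear_mod_id.
exact: linear_mod_comp.
Qed.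

End Congruence.

Fixpoint add_span B (us : seq V) : V -> Prop :=
  match us with
  | [::] => B
  | u :: us => fun x => exists y a, add_span B us y /\ x = y + a *: u
  end.

Definition spanned_by (us : seq V) := forall x, add_span (fun x => x = 0) us x.

Lemma add_span_submod B us : submodule B -> submodule (add_span B us).
Proof.
move=> sB; elim: us => [|u us IH] //=; split.
- by exists 0, 0; rewrite scale0r addr0; split=> //; apply: submod0.
- move=> x y [x1 [a [H1 ->]]] [y1 [b [H2 ->]]]; exists (x1 + y1), (a + b).
  by rewrite scalerDl addrACA; split=> //; apply: submodD.
- move=> c x [x1 [a [H1 ->]]]; exists (c *: x1), (c * a).
  by rewrite scalerDr scalerA; split=> //; apply: submodZ.
Qed.

Lemma add_span_base B us : submodule B -> incl B (add_span B us).
Proof.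
move=> sB; elim: us => [|u us IH] x Hx //=.
by exists x, 0; rewrite scale0r addr0; split=> //; apply: IH.
Qed.

Lemma add_span_gen B us u a : submodule B -> u \in us -> add_span B us (a *: u).
Proof.
move=> sB; elim: us => [|v us IH] //; rewrite in_cons => /orP [/eqP ->|Hu] /=.
  by exists 0, a; rewrite add0r; split=> //; apply: submod0; apply: add_span_submod.
by exists (a *: u), 0; rewrite scale0r addr0; split=> //; apply: IH.
Qed.

Lemma add_span_min B us S : submodule S -> incl B S -> (forall u, u \in us -> S u) ->
  incl (add_span B us) S.
Proof.
move=> sS HB; elim: us => [|u us IH] Hu x /=; first exact: HB.
move=> [y [a [Hy ->]]]; apply: submodD => //.
  by apply: IH => // v Hv; apply: Hu; rewrite in_cons Hv orbT.
by apply: submodZ => //; apply: Hu; rewrite mem_head.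
Qed.

Lemma spanned_by_sum (us : seq V) :
  (forall x, exists c : seq A, x = \sum_(i < size us) c`_i *: us`_i) -> spanned_by us.
Proof.
move=> Hus x; have [c ->] := Hus x.
apply: submod_sum => [|i _]; first exact: add_span_submod submod_zero.
by apply: add_span_gen submod_zero _; apply: mem_nth.
Qed.

Lemma linear_mod_eq_on_span N us f g : submodule N -> spanned_by us ->
  linear_mod N f -> linear_mod N g -> (forall u, u \in us -> N (f u - g u)) ->
  forall x, N (f x - g x).
Proof.
move=> sN span_us lf lg Hus x; have [[fD fZ] [gD gZ]] := (lf, lg).
have fg0 : N (f 0 - g 0) by apply: submodB sN (linear_mod0 sN lf) (linear_mod0 sN lg).
apply: (add_span_min (S := fun x => N (f x - g x)) _ _ Hus (span_us x)).
- split=> //.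
  + move=> u v Hu Hv; apply: (eqmod_trans sN (y := f u + f v)) => //.
    apply: (eqmod_trans sN (y := g u + g v)); first exact: eqmodD.
    exact: eqmod_sym.
  + move=> a u Hu; apply: (eqmod_trans sN (y := a *: f u)) => //.
    apply: (eqmod_trans sN (y := a *: g u)); first exact: eqmodZ.
    exact: eqmod_sym.
- by move=> _ ->.
Qed.

(* [trace B U P] is (P :&: U) + B, the trace of P on the interval [B, U] of
   the lattice of submodules. *)
Definition trace B U P x := exists p b, [/\ P p, U p, B b & x = p + b].

Definition monotone_chain (C : nat -> V -> Prop) :=
  (forall i j, (i <= j)%N -> incl (C i) (C j)) \/
  (forall i j, (i <= j)%N -> incl (C j) (C i)).

(* For B <= U: U/B has finite length, i.e. the interval [B, U] satisfies both
   chain conditions. *)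
Definition finite_length B U := forall C, (forall i, submodule (C i)) ->
  monotone_chain C ->
  exists K, forall i, (K <= i)%N -> forall x, trace B U (C i) x <-> trace B U (C K) x.

Lemma trace_submod B U P : submodule B -> submodule U -> submodule P ->
  submodule (trace B U P).
Proof.
move=> sB sU sP; split.
- by exists 0, 0; rewrite addr0; split=> //; apply: submod0.
- move=> _ _ [p [b [H1 H2 H3 ->]]] [q [c [H4 H5 H6 ->]]].
  by exists (p + q), (b + c); rewrite addrACA; split=> //; apply: submodD.
- move=> a _ [p [b [H1 H2 H3 ->]]].
  by exists (a *: p), (a *: b); rewrite scalerDr; split=> //; apply: submodZ.
Qed.

Lemma trace_monotone B U P Q : incl P Q -> incl (trace B U P) (trace B U Q).
Proof. by move=> PQ _ [p [b [H1 H2 H3 ->]]]; exists p, b; split=> //; apply: PQ. Qed.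

Lemma trace_chain B U C : monotone_chain C -> monotone_chain (fun i => trace B U (C i)).
Proof. by case=> H; [left|right] => i j Hij; apply: trace_monotone; apply: H. Qed.

Lemma base_trace B U P : submodule U -> submodule P -> incl B (trace B U P).
Proof. by move=> sU sP b Hb; exists 0, b; rewrite add0r; split=> //; apply: submod0. Qed.

Lemma trace_top B U P : submodule U -> incl B U -> incl (trace B U P) U.
Proof. by move=> sU BU _ [p [b [H1 H2 H3 ->]]]; apply: submodD => //; apply: BU. Qed.

Lemma trace_id B U P : submodule P -> incl B P -> incl (trace B U P) P.
Proof. by move=> sP BP _ [p [b [H1 H2 H3 ->]]]; apply: submodD => //; apply: BP. Qed.

Lemma traceT_id B P : submodule B -> submodule P -> incl B P ->
  forall x, trace B (fun _ => True) P x <-> P x.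
Proof.
move=> sB sP BP x; split; first exact: trace_id.
by move=> Px; exists x, 0; rewrite addr0; split=> //; apply: submod0.
Qed.

Lemma finite_length_chain B C : submodule B -> finite_length B (fun _ => True) ->
  (forall i, submodule (C i)) -> monotone_chain C -> (forall i, incl B (C i)) ->
  exists K, forall i, (K <= i)%N -> forall x, C i x <-> C K x.
Proof.
move=> sB finB sC mC BC; have [K HK] := finB C sC mC.
exists K => i Hi x.
by rewrite -(traceT_id sB (sC i) (BC i)) -(traceT_id sB (sC K) (BC K)) HK.
Qed.

(* Modular law: a submodule Q <= U containing P is determined by its traces
   on [B, X] and [X, U]. *)
Lemma incl_of_traces B X U P Q : submodule B -> submodule X -> submodule P ->
  submodule Q -> incl P Q -> incl B P -> incl Q U ->
  (forall x, trace B X P x <-> trace B X Q x) ->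
  (forall x, trace X U P x <-> trace X U Q x) -> incl Q P.
Proof.
move=> sB sX sP sQ PQ BP QU eBX eXU q Qq.
have : trace X U Q q by exists q, 0; rewrite addr0; split=> //; [apply: QU|apply: submod0].
move/eXU => [p [y [Pp _ Xy Eq]]].
have Qy : Q y by rewrite -(addKr p y) -Eq; apply: submodD sQ (submodN sQ (PQ _ Pp)) Qq.
have : trace B X Q y by exists y, 0; rewrite addr0; split=> //; apply: submod0.
by move/eBX/trace_id => /(_ sP BP) Py; rewrite Eq; apply: submodD.
Qed.

Lemma finite_length_trans B X U : submodule B -> submodule X -> submodule U ->
  incl B X -> incl X U -> finite_length B X -> finite_length X U -> finite_length B U.
Proof.
move=> sB sX sU BX XU finBX finXU C sC mC.
pose P i := trace B U (C i).
have sP i : submodule (P i) by apply: trace_submod.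
have mP : monotone_chain P by apply: trace_chain.
have BP i : incl B (P i) by apply: base_trace.
have PU i : incl (P i) U by apply: trace_top => // x /BX /XU.
have [K1 H1] := finBX P sP mP; have [K2 H2] := finXU P sP mP.
exists (maxn K1 K2) => i; set K := maxn K1 K2 => Ki.
have [K1i K2i] : (K1 <= i)%N /\ (K2 <= i)%N by apply/andP; rewrite -geq_max.
have [K1K K2K] : (K1 <= K)%N /\ (K2 <= K)%N by rewrite leq_maxl leq_maxr.
have E1 x : trace B X (P i) x <-> trace B X (P K) x by rewrite H1 // H1.
have E2 x : trace X U (P i) x <-> trace X U (P K) x by rewrite H2 // H2.
have E1' x := iff_sym (E1 x); have E2' x := iff_sym (E2 x).
case: mP => H x; split; do ?exact: H.
- exact: incl_of_traces sB sX (sP _) (sP _) (H _ _ Ki) (BP _) (PU _) E1' E2' x.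
- exact: incl_of_traces sB sX (sP _) (sP _) (H _ _ Ki) (BP _) (PU _) E1 E2 x.
Qed.

Lemma finite_length_sub B U U' : submodule U' -> incl U' U ->
  finite_length B U -> finite_length B U'.
Proof.
move=> sU' U'U finBU C sC mC.
pose C' i x := C i x /\ U' x.
have sC' i : submodule (C' i).
  split; first by split; apply: submod0.
  - by move=> x y [? ?] [? ?]; split; apply: submodD.
  - by move=> a x [? ?]; split; apply: submodZ.
have mC' : monotone_chain C'.
  by case: mC => H; [left|right] => i j Hij x [H1 H2]; split=> //; apply: (H _ _ Hij).
have [K HK] := finBU C' sC' mC'.
have E i x : trace B U (C' i) x <-> trace B U' (C i) x.
  split=> - [p [b [H1 H2 H3 ->]]]; exists p, b; first by case: H1.
  by split=> //; apply: U'U.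
by exists K => i Hi x; rewrite -E -E HK.
Qed.

Lemma finite_length_refl B : submodule B -> finite_length B B.
Proof.
move=> sB C sC mC; exists 0%N => i _ x.
suff E j : trace B B (C j) x <-> B x by rewrite !E.
split; last exact: base_trace.
by move=> [p [b [_ H2 H3 ->]]]; apply: submodD.
Qed.

End Submodules.

Section ModPow.
Variables (A : comNzRingType) (m : A -> Prop) (V : lmodType A).
Local Notation mpow := (mod_pow (M := V) m).

Lemma mod_pow_submod j : submodule (mpow j).
Proof.
split.
- by exists [::]; rewrite big_nil.
- move=> x y [s [Hs ->]] [t [Ht ->]]; exists (s ++ t); rewrite big_cat; split=> //.
  by move=> p; rewrite mem_cat => /orP [/Hs|/Ht].
- move=> a x [s [Hs ->]]; exists [seq (a * p.1, p.2) | p <- s]; split.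
  + by move=> _ /mapP [p /Hs Hp ->]; apply: ideal_powMl.
  + by rewrite big_map scaler_sumr; apply: eq_bigr => p _; rewrite scalerA.
Qed.

Lemma mod_pow_gen j a (z : V) : ideal_pow m j a -> mpow j (a *: z).
Proof.
move=> Ha; exists [:: (a, z)]; rewrite big_seq1.
by split=> // p; rewrite inE => /eqP ->.
Qed.

Lemma mod_pow_min j (S : V -> Prop) : submodule S ->
  (forall a z, ideal_pow m j a -> S (a *: z)) -> incl (mpow j) S.
Proof. by move=> sS H _ [s [Hs ->]]; apply: submod_sum => // p /Hs; apply: H. Qed.

Lemma mod_pow_le k j : (k <= j)%N -> incl (mpow j) (mpow k).
Proof.
move=> Hkj; apply: mod_pow_min; first exact: mod_pow_submod.
by move=> a z Ha; apply: mod_pow_gen; apply: ideal_pow_le Hkj Ha.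
Qed.

Lemma mod_pow0 (x : V) : mpow 0 x.
Proof. by rewrite -(scale1r x); apply: mod_pow_gen. Qed.

Lemma mod_pow_mul j k a (w : V) : ideal_pow m j a -> mpow k w -> mpow (j + k) (a *: w).
Proof.
move=> Ha; apply: (@mod_pow_min k (fun w => mpow (j + k) (a *: w))).
- split; first by rewrite scaler0; apply: submod0; apply: mod_pow_submod.
  + by move=> x y Hx Hy; rewrite scalerDr; apply: submodD => //; apply: mod_pow_submod.
  + move=> b x Hx; rewrite scalerA mulrC -scalerA.
    by apply: submodZ => //; apply: mod_pow_submod.
- by move=> b z Hb; rewrite scalerA; apply: mod_pow_gen; apply: ideal_pow_mul.
Qed.

Lemma linear_mod_pow_le k j h : (k <= j)%N -> linear_mod (mpow j) h -> linear_mod (mpow k) h.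
Proof. by move=> Hkj [hD hZ]; split=> *; apply: (mod_pow_le Hkj); [apply: hD|apply: hZ]. Qed.

Lemma linear_mod_pow_stable j h : linear_mod (mpow j) h -> forall z, mpow j z -> mpow j (h z).
Proof.
move=> lh; apply: mod_pow_min (linear_mod_ker (mod_pow_submod j) lh) _ => a z Ha.
by apply: (eqmod_mem (mod_pow_submod j) (lh.2 a z)); apply: mod_pow_gen.
Qed.

(* Nakayama's lemma for the module V/m^j V. *)
Lemma linear_mod_pow_surj j h : linear_mod (mpow j) h ->
  (forall y, exists x, mpow 1 (h x - y)) -> forall y, exists x, mpow j (h x - y).
Proof.
move=> + h_surj1; elim: j => [|j IH] lh y; first by exists 0; apply: mod_pow0.
have [x Hx] := IH (linear_mod_pow_le (leqnSn j) lh) y.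
have sNj := mod_pow_submod j.+1.
pose S w := exists x', mpow j.+1 (h x' - w).
have sS : submodule S.
  split; first by exists 0; rewrite subr0; apply: linear_mod0.
  - move=> u v [x1 H1] [x2 H2]; exists (x1 + x2).
    by apply: (eqmod_trans sNj (lh.1 x1 x2)); apply: eqmodD.
  - move=> a u [x1 H1]; exists (a *: x1).
    by apply: (eqmod_trans sNj (lh.2 a x1)); apply: eqmodZ.
have mpow_S : incl (mpow j) S.
  apply: mod_pow_min => // a z Ha; have [x0 Hx0] := h_surj1 z.
  exists (a *: x0); apply: (eqmod_trans sNj (lh.2 a x0)).
  by rewrite -scalerBr -addn1; apply: mod_pow_mul.
have : S (h x - (h x - y)).
  by apply: submodB => //; [exists x; apply: eqmod_refl|apply: mpow_S].
by rewrite opprB addrC subrK.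
Qed.

End ModPow.

Section MaximalIdeal.
Variables (A : comNzRingType) (m : A -> Prop) (m_max : maximal_ideal m).
Variable V : lmodType A.

Lemma max_ideal_comaximal a : ~ m a -> exists r c, m r /\ 1 = r + c * a.
Proof.
move=> ma; have [[[m0 mD mM] _] m_maxl] := m_max.
pose J y := exists r c, m r /\ y = r + c * a.
have J_ideal : is_ideal J.
  split; first by exists 0, 0; rewrite mul0r addr0.
  - move=> _ _ [r1 [c1 [H1 ->]]] [r2 [c2 [H2 ->]]]; exists (r1 + r2), (c1 + c2).
    by rewrite mulrDl addrACA; split=> //; apply: mD.
  - move=> b _ [r1 [c1 [H1 ->]]]; exists (b * r1), (b * c1).
    by rewrite mulrDr mulrA; split=> //; apply: mM.
apply: NNPP => J1; apply: ma; apply: (m_maxl J).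
- by split=> // [[r [c [H1 H2]]]]; apply: J1; exists r, c.
- by move=> x Hx; exists x, 0; rewrite mul0r addr0.
- by exists 0, 1; rewrite mul1r add0r.
Qed.

(* A P-element outside B has the form b + a u with a a unit modulo m, so u is in P. *)
Lemma add_span1_simple B (u : V) P : submodule B -> (forall a, m a -> B (a *: u)) ->
  submodule P -> incl B P -> incl P (add_span B [:: u]) ->
  incl P B \/ incl (add_span B [:: u]) P.
Proof.
move=> sB mu_B sP BP P_Bu.
case: (classic (exists x, P x /\ ~ B x)) => [[x [Px nBx]]|]; last first.
  by move=> nPB; left=> x Px; apply: NNPP => nBx; apply: nPB; exists x.
right; have [y [a [By Ex]]] := P_Bu _ Px.
have ma : ~ m a by move=> ma; apply: nBx; rewrite Ex; apply: submodD => //; apply: mu_B.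
have [r [c [mr E1]]] := max_ideal_comaximal ma.
have Pau : P (a *: u).
  by rewrite -(addKr y (a *: u)) -Ex; apply: submodD sP (submodN sP (BP _ By)) Px.
have Pu : P u.
  rewrite -(scale1r u) E1 scalerDl -scalerA.
  by apply: submodD => //; [apply: BP; apply: mu_B|apply: submodZ].
by move=> _ [y' [a' [By' ->]]]; apply: submodD => //; [apply: BP|apply: submodZ].
Qed.

Lemma finite_length_add_span1 B (u : V) : submodule B ->
  (forall a, m a -> B (a *: u)) -> finite_length B (add_span B [:: u]).
Proof.
move=> sB mu_B C sC mC; set U := add_span B [:: u].
have sU : submodule U by apply: add_span_submod.
pose P i := trace B U (C i).
have sP i : submodule (P i) by apply: trace_submod.
have BP i : incl B (P i) by apply: base_trace.
have PU i : incl (P i) U by apply: trace_top => //; apply: add_span_base.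
have PB_or_UP i : incl (P i) B \/ incl U (P i) by apply: add_span1_simple.
rewrite -/U -/P; case: (trace_chain B U mC) => incr.
- case: (classic (exists i0, incl U (P i0))) => [[i0 Hi0]|nUP].
    by exists i0 => i Hi x; split=> [/PU /Hi0|]; last apply: incr.
  have PB i : incl (P i) B by case: (PB_or_UP i) => // UP; case: nUP; exists i.
  by exists 0%N => i _ x; split=> /PB; apply: BP.
- case: (classic (exists i0, incl (P i0) B)) => [[i0 Hi0]|nPB].
    by exists i0 => i Hi x; split=> [/(incr _ _ Hi)|] /Hi0; apply: BP.
  have UP i : incl U (P i) by case: (PB_or_UP i) => // PB; case: nPB; exists i.
  by exists 0%N => i _ x; split=> /PU; apply: UP.
Qed.

Lemma finite_length_add_span B (us : seq V) : submodule B ->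
  (forall u a, u \in us -> m a -> B (a *: u)) -> finite_length B (add_span B us).
Proof.
move=> sB; elim: us => [|u us IH] mus_B /=; first exact: finite_length_refl.
have sBus := add_span_submod us sB.
apply: (@finite_length_trans _ _ _ (add_span B us)) => //.
- exact: add_span_submod (u :: us) sB.
- exact: add_span_base.
- by move=> x Hx; exists x, 0; rewrite scale0r addr0.
- by apply: IH => v a Hv ma; apply: mus_B => //; rewrite in_cons Hv orbT.
- apply: finite_length_add_span1 => // a ma.
  by apply: add_span_base => //; apply: mus_B => //; rewrite mem_head.
Qed.

Variable gs : seq V.
Hypothesis gs_span : spanned_by gs.
Local Notation mpow := (mod_pow (M := V) m).

Lemma mod_pow_incl_add_span B j (ts : seq A) : submodule B ->
  (forall x, ideal_pow m j x -> exists c : seq A, x = \sum_(i < size ts) c`_i * ts`_i) ->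
  incl (mpow j) (add_span B [seq t *: g | t <- ts, g <- gs]).
Proof.
move=> sB Hts; set us := [seq _ | t <- _, g <- _].
have sU := add_span_submod us sB.
apply: mod_pow_min => // a z Ha.
pose S w := forall a, ideal_pow m j a -> add_span B us (a *: w).
suff : S z by apply.
apply: (add_span_min (B := fun x => x = 0) _ _ _ (gs_span z)).
- split=> [b _|x y Hx Hy b Hb|c x Hx b Hb].
  + by rewrite scaler0; apply: submod0.
  + by rewrite scalerDr; apply: submodD => //; [apply: Hx|apply: Hy].
  + by rewrite scalerA mulrC -scalerA; apply: submodZ => //; apply: Hx.
- by move=> _ -> b _; rewrite scaler0; apply: submod0.
- move=> g Hg b /Hts [c ->]; rewrite scaler_suml.
  apply: submod_sum => // i _; rewrite -scalerA; apply: add_span_gen => //.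
  by apply: allpairs_f => //; apply: mem_nth.
Qed.

Hypothesis noeth : noetherian_ring A.


Lemma ideal_pow_fin_gen j : exists ts : seq A, (forall t, t \in ts -> ideal_pow m j t) /\
  forall x, ideal_pow m j x -> exists c : seq A, x = \sum_(i < size ts) c`_i * ts`_i.
Proof.
have [ts Hts] := noeth (ideal_pow_is_ideal m j).
exists ts; split=> [t t_ts|x /Hts //]; apply/Hts.
have t_idx : (index t ts < size ts)%N by rewrite index_mem.
exists (mkseq (fun i => (i == index t ts)%:R) (size ts)).
rewrite (bigD1 (Ordinal t_idx)) //= big1 ?addr0.
  by rewrite nth_mkseq // eqxx mul1r nth_index.
move=> i /eqP ni; rewrite nth_mkseq //; case: eqP => [it|_]; last by rewrite mul0r.
by case: ni; apply: val_inj.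
Qed.

Lemma finite_length_mod_pow_succ j : finite_length (mpow j.+1) (mpow j).
Proof.
have [ts [ts_m Hts]] := ideal_pow_fin_gen j.
have sB := mod_pow_submod m V j.+1.
apply: finite_length_sub (mod_pow_submod m V j) (mod_pow_incl_add_span sB Hts) _.
apply: finite_length_add_span => // u a /allpairsP [[t g] [/= Ht Hg ->]] ma.
by rewrite scalerA; apply: mod_pow_gen; apply: ideal_powSM => //; apply: ts_m.
Qed.

Lemma finite_length_mod_pow j : finite_length (mpow j) (fun _ => True).
Proof.
elim: j => [|j IH].
  apply: (finite_length_sub (U := mpow 0)) => // [x _|]; first exact: mod_pow0.
  by apply: finite_length_refl; apply: mod_pow_submod.
apply: (finite_length_trans (X := mpow j)) => //; try exact: mod_pow_submod.
- exact: mod_pow_le.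
- exact: finite_length_mod_pow_succ.
Qed.

End MaximalIdeal.

Section SurjectiveEndomorphism.
Variables (A : comNzRingType) (V : lmodType A) (N : V -> Prop) (h : V -> V).
Hypotheses (sN : submodule N) (finN : finite_length N (fun _ => True)).
Hypotheses (h_lin : linear_mod N h) (h_stable : forall x, N x -> N (h x)).
Hypothesis h_surj : forall y, exists x, N (h x - y).

Lemma surj_linear_mod_inj x y : N (h x - h y) -> N (x - y).
Proof.
move=> Hxy; have Nhz : N (h (x - y)).
  have := h_lin.1 (x - y) y; rewrite subrK => H.
  by rewrite -(addrK (h y) (h (x - y))); exact: (eqmod_trans sN (eqmod_sym sN H) Hxy).
pose K k u := N (iter k h u).
have stable_iter k u : N u -> N (iter k h u) by elim: k => //= k IH Nu; exact/h_stable/IH.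
have sK k : submodule (K k).
  exact: (linear_mod_ker sN (linear_mod_iter sN k h_lin h_stable)).
have incrK : monotone_chain K.
  left=> k j /subnK <-; elim: (j - k)%N => [|d IH] u Ku //.
  by rewrite addSn /K /=; apply/h_stable/IH.
have [k0 Hk0] := finite_length_chain sN finN sK incrK stable_iter.
have [w Hw] : exists w, N (iter k0 h w - (x - y)).
  elim: (k0) (x - y) => [|k IH] v; first by exists v; apply: eqmod_refl.
  have [x1 Hx1] := h_surj v; have [w Hw] := IH x1.
  exists w; apply: (eqmod_trans sN _ Hx1).
  exact: (linear_mod_wd sN h_lin h_stable Hw).
have : K k0.+1 w.
  exact: (eqmod_mem sN (linear_mod_wd sN h_lin h_stable Hw) Nhz).
move/(Hk0 _ (leqnSn k0)) => Nw.
exact: (eqmod_mem sN (eqmod_sym sN Hw) Nw).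
Qed.

End SurjectiveEndomorphism.

Section FfunModule.
Variables (A : comNzRingType) (M : lmodType A) (r : nat).
Local Notation V := {ffun 'I_r -> M}.

Definition ffun_single (q : 'I_r) (u : M) : V := [ffun q' => if q' == q then u else 0].

Lemma spanned_by_ffun (gs : seq M) : spanned_by gs ->
  spanned_by [seq ffun_single q g | q <- enum 'I_r, g <- gs].
Proof.
move=> gs_span v; set us := [seq _ | q <- _, g <- _].
have sU := add_span_submod us (submod_zero V).
have -> : v = \sum_q ffun_single q (v q).
  apply/ffunP => q; rewrite sum_ffunE (bigD1 q) //= big1 ?addr0 => [|i /negbTE ni].
    by rewrite ffunE eqxx.
  by rewrite ffunE eq_sym ni.
apply: submod_sum => // q _.
pose S u := add_span (fun x => x = 0) us (ffun_single q u).
have single0 : ffun_single q 0 = 0 by apply/ffunP => q'; rewrite !ffunE; case: eqP.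
apply: (add_span_min (S := S) _ _ _ (gs_span (v q))).
- split; first by rewrite /S single0; apply: submod0.
  + move=> x y Sx Sy; rewrite /S (_ : ffun_single q (x + y) = ffun_single q x + ffun_single q y).
      exact: submodD.
    by apply/ffunP => q'; rewrite !ffunE; case: eqP; rewrite ?addr0.
  + move=> a x Sx; rewrite /S (_ : ffun_single q (a *: x) = a *: ffun_single q x).
      exact: submodZ.
    by apply/ffunP => q'; rewrite !ffunE; case: eqP; rewrite ?scaler0.
- by move=> _ ->; rewrite /S single0; apply: submod0.
- move=> g g_gs; rewrite /S -(scale1r (ffun_single q g)); apply: add_span_gen.
    exact: submod_zero.
  by apply: allpairs_f => //; rewrite mem_enum.
Qed.

Lemma mod_pow_ffun_app (m : A -> Prop) j (v : V) q : mod_pow m j v -> mod_pow m j (v q).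
Proof.
move: v; apply: (mod_pow_min (S := fun v : V => mod_pow m j (v q))).
- have sN := mod_pow_submod m M j.
  by split=> [|x y Hx Hy|a x Hx]; rewrite ffunE;
    [apply: submod0|apply: submodD|apply: submodZ].
- by move=> a z Ha; rewrite ffunE; apply: mod_pow_gen.
Qed.

End FfunModule.

Section AutModPow.
Variables (A : comNzRingType) (m : A -> Prop) (m_max : maximal_ideal m).
Hypothesis noeth : noetherian_ring A.
Variables (M : lmodType A) (gs : seq M) (gs_span : spanned_by gs).
Local Notation mpow := (mod_pow (M := M) m).

Lemma G_elt_of_surj i h : linear_mod (mpow i) h ->
  (forall y, exists x, mpow 1 (h x - y)) -> G_elt m i h.
Proof.
move=> lh h_surj1; have sN := mod_pow_submod m M i.
have h_stable := linear_mod_pow_stable lh.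
have h_surj := linear_mod_pow_surj lh h_surj1.
have finN := finite_length_mod_pow m_max gs_span noeth i.
split; [|exact: lh.1|exact: lh.2| |exact: h_surj].
- by move=> x y; apply: linear_mod_wd.
- exact: surj_linear_mod_inj sN finN lh h_stable h_surj.
Qed.

Variables (n : nat) (n_gt0 : (0 < n)%N).
Local Notation r := (size gs).

(* The submodule L_i of (M/m^n M)^r, represented by its preimage in M^r. *)
Definition gen_images i (v : {ffun 'I_r -> M}) :=
  exists h, linear_mod (mpow i) h /\ forall q, mpow n (v q - h gs`_q).

Lemma in_image_gen_images i (g : M -> M) : (n <= i)%N -> G_elt m n g ->
  in_image m n i g <-> gen_images i [ffun q : 'I_r => g gs`_q].
Proof.
move=> ni [gwd gD gZ _ g_surj]; have sNn := mod_pow_submod m M n.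
split=> [[h [[_ hD hZ _ _] hg]]|[h [lh hg]]].
  by exists h; split=> // q; rewrite ffunE; exact: (eqmod_sym sNn (hg _)).
have lhn := linear_mod_pow_le ni lh.
have lg : linear_mod (mpow n) g by [].
have hg_all x : mpow n (h x - g x).
  apply: (linear_mod_eq_on_span sNn gs_span lhn lg) => u u_gs.
  have u_idx : (index u gs < r)%N by rewrite index_mem.
  by have := hg (Ordinal u_idx); rewrite ffunE /= nth_index // => /(eqmod_sym sNn).
exists h; split=> //; apply: G_elt_of_surj => // y.
have [x Hx] := g_surj y; exists x; apply: (mod_pow_le n_gt0).
exact: (eqmod_trans sNn (hg_all x) Hx).
Qed.

Lemma gen_images_submod i : submodule (gen_images i).
Proof.
have sNi := mod_pow_submod m M i; have sNn := mod_pow_submod m M n.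
split.
- exists (fun _ => 0); split; last by move=> q; rewrite ffunE subrr; apply: submod0.
  by split=> *; rewrite ?addr0 ?scaler0 subrr; apply: submod0.
- move=> v w [h1 [[h1D h1Z] H1]] [h2 [[h2D h2Z] H2]]; exists (fun x => h1 x + h2 x).
  split=> [|q]; last by rewrite ffunE; apply: eqmodD.
  by split=> [x y|a x]; rewrite ?scalerDr; [rewrite addrACA|]; apply: eqmodD.
- move=> a v [h [[hD hZ] H]]; exists (fun x => a *: h x).
  split=> [|q]; last by rewrite ffunE; apply: eqmodZ.
  split=> [x y|b x]; first by rewrite -scalerDr; apply: eqmodZ.
  by rewrite scalerA mulrC -scalerA; apply: eqmodZ.
Qed.

Lemma gen_images_decreasing : monotone_chain gen_images.
Proof. by right=> i j ij v [h [lh hv]]; exists h; split=> //; apply: linear_mod_pow_le lh. Qed.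

Lemma mod_pow_gen_images i : incl (mod_pow m n) (gen_images i).
Proof.
move=> v Nv; exists (fun _ => 0); split=> [|q]; last first.
  by rewrite subr0; apply: mod_pow_ffun_app.
by split=> *; rewrite ?addr0 ?scaler0 subrr; apply: submod0; apply: mod_pow_submod.
Qed.

Lemma gen_images_stabilize :
  exists K, forall i, (K <= i)%N -> forall v, gen_images i v <-> gen_images K v.
Proof.
apply: finite_length_chain (mod_pow_submod _ _ n) _ gen_images_submod
  gen_images_decreasing mod_pow_gen_images.
exact: (finite_length_mod_pow m_max (spanned_by_ffun (r := r) gs_span) noeth n).
Qed.

End AutModPow.

Theorem mainTheorem16 (A : comNzRingType) (m : A -> Prop) (M : lmodType A)
  (hloc : local_ring_with m) (hnoeth : noetherian_ring A)
  (hcompl : madic_complete m) (hfg : fin_gen_module M) :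
  forall n : nat, (1 <= n)%N ->
    exists N : nat, (n <= N)%N /\
      forall i j : nat, (N <= i)%N -> (N <= j)%N ->
        forall g : M -> M, G_elt m n g ->
          (in_image m n i g <-> in_image m n j g).
Proof.
move=> n n_gt0; have m_max := hloc.1.
have [gs gs_span] : exists gs : seq M, spanned_by gs.
  by have [gs Hgs] := hfg; exists gs; apply: spanned_by_sum.
have [K HK] := gen_images_stabilize m_max hnoeth gs_span n.
exists (maxn n K); split=> [|i j]; first exact: leq_maxl.
rewrite !geq_max => /andP [ni Ki] /andP [nj Kj] g Gg.
by rewrite (in_image_gen_images m_max hnoeth gs_span n_gt0 ni Gg)
  (in_image_gen_images m_max hnoeth gs_span n_gt0 nj Gg) (HK i Ki) (HK j Kj).
Qed.
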